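(* Assume the Low-Rank MDP satisfies $\eta$-reachability for some $\eta>0$. Fix $h\in[H-1]$, $C\ge1$, $\varepsilon\le\eta/2$. Let $\Psi=\{\pi_1,\dots,\pi_d\}\subseteq\Pi_{\mathrm{M}}$ be such that $\{\phi^{\star,\pi_i}_h\}_{i\in[d]}$ is a $(C,\varepsilon)$-approximate barycentric spanner for $\mathcal{W}_h=\{\phi^{\star,\pi}_h:\pi\in\Pi_{\mathrm{M}}\}$. Then $\Psi$ is a $(\frac{1}{2dC},0)$-policy cover for layer $h+1$, i.e. $\max_{\pi\in\Psi}d^\pi(x)\ge\frac{1}{2dC}\sup_{\pi'\in\Pi_{\mathrm{M}}}d^{\pi'}(x)$ for every $x\in\mathcal{X}_{h+1}$.
   Context: Setting (Low-Rank MDP). Fix horizon $H\in\mathbb{N}$, dimension $d\in\mathbb{N}$, a finite action set $\mathcal{A}$ with $|\mathcal{A}|=A$, and a measurable state space $\mathcal{X}=\mathcal{X}_1\sqcup\cdots\sqcup\mathcal{X}_H$ (disjoint layers) carrying a $\sigma$-finite measure $\nu$. The MDP $\mathcal{M}$ has an initial distribution $\rho$ on $\mathcal{X}_1$ and, for each $h\in[H-1]$, measurable maps $\phi^\star_h:\mathcal{X}_h\times\mathcal{A}\to\mathbb{R}^d$ and $\mu^\star_{h+1}:\mathcal{X}_{h+1}\to\mathbb{R}^d$ such that for every $(x,a)\in\mathcal{X}_h\times\mathcal{A}$ the function $x'\mapsto\mu^\star_{h+1}(x')^\top\phi^\star_h(x,a)$ is a probability density w.r.t. $\nu$ on $\mathcal{X}_{h+1}$;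 this density is the transition kernel $T_h(\cdot\mid x,a)$. $\Pi_{\mathrm{M}}$ denotes the set of randomized Markov policies $\pi:\mathcal{X}\to\Delta(\mathcal{A})$; an episode under $\pi$ draws $x_1\sim\rho$, $a_h\sim\pi(x_h)$, $x_{h+1}\sim T_h(\cdot\mid x_h,a_h)$, and $\mathbb{P}^\pi,\mathbb{E}^\pi$ denote the law and expectation of the trajectory. For $h\ge2$ and $x\in\mathcal{X}_h$, $d^\pi(x)$ denotes the density w.r.t. $\nu$ of the law of $x_h$ under $\pi$ (so $d^\pi(x)=\mu^\star_h(x)^\top\mathbb{E}^\pi[\phi^\star_{h-1}(x_{h-1},a_{h-1})]$). Normalization: $\|\phi^\star_h(x,a)\|\le 1$ for all $h,x,a$, and $\|\int_{\mathcal{X}_h}\mu^\star_h(x)g(x)\,d\nu(x)\|\le\sqrt d$ for every measurable $g:\mathcal{X}_h\to[0,1]$. Here $\|\cdot\|$ is the Euclidean norm. Notation: $\phi^{\star,\pi}_h:=\mathbb{E}^\pi[\phi^\star_h(x_h,a_h)]$. $\eta$-reachability: for all $h\in\{2,\dots,H\}$ and $x\in\mathcal{X}_h$, $\sup_{\pi\in\Pi_{\mathrm{M}}}d^\pi(x)\ge\eta\|\mu^\star_h(x)\|$. Barycentric spanner: given $\mathcal{W}\subseteq\mathbb{R}^d$ spanning $\mathbb{R}^d$, $\{w_1,\dots,w_d\}\subseteq\mathcal{W}$ is a $(C,\varepsilon)$-approximate barycentric spanner for $\mathcal{W}$ if for every $w\in\mathcal{W}$ there are $\beta_1,\dots,\beta_d\in[-C,C]$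 with $\|w-\sum_i\beta_iw_i\|\le\varepsilon$. *)

From HB Require Import structures.
From mathcomp Require Import all_boot all_order all_algebra.
From mathcomp Require Import all_classical all_reals all_analysis.

Set Implicit Arguments.
Unset Strict Implicit.
Unset Printing Implicit Defensive.

Import Order.TTheory GRing.Theory Num.Theory.
Import numFieldNormedType.Exports.

Local Open Scope classical_set_scope.
Local Open Scope ring_scope.

Definition dotv {R : pzRingType} {d : nat} (u v : 'rV[R]_d) : R :=
  \sum_(i < d) u 0 i * v 0 i.

Definition enorm {R : rcfType} {d : nat} (v : 'rV[R]_d) : R :=
  Num.sqrt (\sum_(i < d) v 0 i ^+ 2).

(* Data of a low-rank MDP over a common measurable state space T
   (layer h of the paper's layered space is represented by the time index h).
   nu : reference sigma-finite measure, rho : initial distribution,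
   phi h x a = phi*_h(x,a),  mu h x = mu*_h(x). *)
Record lrmdp (R : realType) (dT : measure_display) (T : measurableType dT)
    (A : finType) (d : nat) := LRMDP {
  nu  : {measure set T -> \bar R};
  rho : probability T R;
  phi : nat -> T -> A -> 'rV[R]_d;
  mu  : nat -> T -> 'rV[R]_d
}.

Section LowRank.
Context {R : realType} {dT : measure_display} {T : measurableType dT}
  {A : finType} {d : nat}.

Definition markov_policy (pi : nat -> T -> A -> R) : Prop :=
  (forall h x a, 0 <= pi h x a) /\
  (forall h x, \sum_(a : A) pi h x a = 1) /\
  (forall h a, measurable_fun setT (fun x => pi h x a)).

(* featocc M pi h = phi*^{pi}_h = E^pi[phi*_h(x_h, a_h)], computed layer by
   layer: x_1 ~ rho, and for h >= 2 the law of x_h has density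
   d^pi(x) = mu*_h(x)^T E^pi[phi*_{h-1}(x_{h-1}, a_{h-1})] w.r.t. nu. *)
Fixpoint featocc (M : @lrmdp R dT T A d) (pi : nat -> T -> A -> R) (h : nat)
    : 'rV[R]_d :=
  match h with
  | 0 => 0
  | S h' =>
    match h' with
    | 0 => \row_(i < d) Rintegral (rho M) setT
                          (fun x => \sum_(a : A) pi 1%N x a * phi M 1%N x a 0 i)
    | S _ => \row_(i < d) Rintegral (nu M) setT
                (fun x => \sum_(a : A) pi h x a * phi M h x a 0 i
                           * dotv (mu M h x) (featocc M pi h'))
    end
  end.

(* d^pi(x) for x in layer h >= 2 : density of the law of x_h w.r.t. nu. *)
Definition occ_dens (M : @lrmdp R dT T A d) (pi : nat -> T -> A -> R) (h : nat)
    (x : T) : R :=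
  dotv (mu M h x) (featocc M pi h.-1).

Definition is_lowrank_mdp (H : nat) (M : @lrmdp R dT T A d) : Prop :=
  sigma_finite setT (nu M) /\
  (forall h, (1 <= h <= H.-1)%N -> forall a (i : 'I_d),
      measurable_fun setT (fun x => phi M h x a 0 i)) /\
  (forall h, (2 <= h <= H)%N -> forall i : 'I_d,
      measurable_fun setT (fun x => mu M h x 0 i)) /\
  (forall h, (1 <= h <= H.-1)%N -> forall x a,
      (forall x', 0 <= dotv (mu M h.+1 x') (phi M h x a)) /\
      (\int[nu M]_(x' in setT) (dotv (mu M h.+1 x') (phi M h x a))%:E = 1)%E) /\
  (forall h, (1 <= h <= H.-1)%N -> forall x a, enorm (phi M h x a) <= 1) /\
  (forall h, (2 <= h <= H)%N -> forall g : T -> R,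
      measurable_fun setT g -> (forall x, 0 <= g x <= 1) ->
      enorm (\row_(i < d) Rintegral (nu M) setT (fun x => mu M h x 0 i * g x))
        <= Num.sqrt d%:R).

Definition eta_reachable (H : nat) (M : @lrmdp R dT T A d) (eta : R) : Prop :=
  forall h, (2 <= h <= H)%N -> forall x : T,
    (ereal_sup [set (occ_dens M pi h x)%:E | pi in markov_policy]
       >= (eta * enorm (mu M h x))%:E)%E.

Definition feat_set (M : @lrmdp R dT T A d) (h : nat) : set 'rV[R]_d :=
  [set featocc M pi h | pi in markov_policy].

Definition spans (W : set 'rV[R]_d) : Prop :=
  forall v : 'rV[R]_d, exists (n : nat) (ws : 'I_n -> 'rV[R]_d) (c : 'I_n -> R),
    (forall j, W (ws j)) /\ v = \sum_(j < n) c j *: ws j.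

Definition approx_bspanner (W : set 'rV[R]_d) (w : 'I_d -> 'rV[R]_d)
    (C eps : R) : Prop :=
  spans W /\ (forall i, W (w i)) /\
  forall v, W v -> exists beta : 'I_d -> R,
    (forall i, - C <= beta i <= C) /\
    enorm (v - \sum_(i < d) beta i *: w i) <= eps.

End LowRank.

(* For x in layer h+1 and any Markov policy pi, the occupancy density is the
   inner product d^pi(x) = <mu_{h+1}(x), phi^pi_h>.  If {phi^{Psi_i}_h} is a
   (C, eps)-approximate barycentric spanner, writing phi^pi_h as a
   combination sum_i beta_i phi^{Psi_i}_h (|beta_i| <= C) plus an error of
   norm at most eps gives, by Cauchy-Schwarz and d^{Psi_i}(x) >= 0,
     d^pi(x) <= C d max_i d^{Psi_i}(x) + eps |mu_{h+1}(x)|.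
   Taking the sup over pi and using eta-reachability
   (sup_pi d^pi(x) >= eta |mu_{h+1}(x)|, with eps <= eta / 2) the error term
   is absorbed, leaving sup_pi d^pi(x) <= 2 d C max_i d^{Psi_i}(x). *)

From HB Require Import structures.
From mathcomp Require Import all_boot all_order all_algebra.
From mathcomp Require Import all_classical all_reals all_analysis.
From mathcomp Require Import measurable_realfun ring lra zify.

Import Order.TTheory GRing.Theory Num.Theory.
Import numFieldNormedType.Exports.

Local Open Scope classical_set_scope.
Local Open Scope ring_scope.

Section EuclideanGeometry.
Context {R : rcfType} {d : nat}.

Lemma enorm_ge0 (v : 'rV[R]_d) : 0 <= enorm v.
Proof. exact: sqrtr_ge0. Qed.

Lemma coord_le_enorm (v : 'rV[R]_d) i : `|v 0 i| <= enorm v.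
Proof.
rewrite /enorm -sqrtr_sqr ler_wsqrtr // (bigD1 i) //= lerDl.
by apply: sumr_ge0 => j _; exact: sqr_ge0.
Qed.

Lemma enorm_sqr (v : 'rV[R]_d) : enorm v ^+ 2 = \sum_(i < d) v 0 i ^+ 2.
Proof. by rewrite sqr_sqrtr // sumr_ge0 // => i _; exact: sqr_ge0. Qed.

(* Cauchy-Schwarz: summing (|v| u_i - |u| v_i)^2 >= 0 gives
   2 |u| |v| (|u| |v| - <u, v>) >= 0; the degenerate case |u| |v| = 0
   forces u = 0 or v = 0 coordinatewise. *)
Lemma dotv_le_enorm (u v : 'rV[R]_d) : dotv u v <= enorm u * enorm v.
Proof.
set a := enorm u; set b := enorm v.
have a0 : 0 <= a := enorm_ge0 u.
have b0 : 0 <= b := enorm_ge0 v.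
have sq_ge0 : 0 <= \sum_(i < d) (b * u 0 i - a * v 0 i) ^+ 2.
  by apply: sumr_ge0 => i _; exact: sqr_ge0.
have expand : \sum_(i < d) (b * u 0 i - a * v 0 i) ^+ 2 =
    b ^+ 2 * (\sum_(i < d) u 0 i ^+ 2) - 2 * (a * b) * dotv u v
    + a ^+ 2 * (\sum_(i < d) v 0 i ^+ 2).
  rewrite /dotv !mulr_sumr -sumrB -big_split /=.
  by apply: eq_bigr => i _; ring.
rewrite -!enorm_sqr -/a -/b in expand.
have [ab_gt0|] := ltrP 0 (a * b); first by nra.
rewrite le_eqVlt ltNge mulr_ge0 // orbF => /eqP ab0.
suff -> : dotv u v = 0 by rewrite ab0.
rewrite /dotv big1 // => i _.
move/eqP: ab0; rewrite mulf_eq0 => /orP[]/eqP zero.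
- by move: (coord_le_enorm u i); rewrite -/a zero normr_le0 => /eqP ->; rewrite mul0r.
- by move: (coord_le_enorm v i); rewrite -/b zero normr_le0 => /eqP ->; rewrite mulr0.
Qed.
End EuclideanGeometry.

Section DotProduct.
Context {R : comPzRingType} {d : nat}.

Lemma dotvDr (u v1 v2 : 'rV[R]_d) : dotv u (v1 + v2) = dotv u v1 + dotv u v2.
Proof. by rewrite /dotv -big_split; apply: eq_bigr => i _; rewrite mxE mulrDr. Qed.

Lemma dotv_sumZr (u : 'rV[R]_d) n (b : 'I_n -> R) (w : 'I_n -> 'rV[R]_d) :
  dotv u (\sum_(j < n) b j *: w j) = \sum_(j < n) b j * dotv u (w j).
Proof.
rewrite /dotv; under eq_bigr do rewrite summxE mulr_sumr.
rewrite exchange_big /=; apply: eq_bigr => j _; rewrite mulr_sumr.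
by apply: eq_bigr => i _; rewrite mxE mulrCA.
Qed.
End DotProduct.

Lemma dotv_approx_combination {R : rcfType} {d n : nat} (u v : 'rV[R]_d)
    (w : 'I_n -> 'rV[R]_d) (beta : 'I_n -> R) (C eps m : R) :
  0 <= C -> (forall j, beta j <= C) -> (forall j, 0 <= dotv u (w j) <= m) ->
  enorm (v - \sum_(j < n) beta j *: w j) <= eps ->
  dotv u v <= C * n%:R * m + eps * enorm u.
Proof.
move=> C0 betaC wm err.
rewrite -(subrK (\sum_(j < n) beta j *: w j) v) dotvDr dotv_sumZr addrC.
apply: lerD.
- apply: (@le_trans _ _ (\sum_(j < n) C * m)).
    apply: ler_sum => j _; have /andP[uw0 uwm] := wm j.
    by apply: (le_trans (ler_wpM2r uw0 (betaC j))); exact: ler_wpM2l.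
  by rewrite sumr_const card_ord -(mulr_natr (C * m)) mulrAC.
- apply: le_trans (dotv_le_enorm u _) _.
  by rewrite mulrC; apply: ler_wpM2r => //; exact: enorm_ge0.
Qed.

Lemma half_reach_absorb {R : realFieldType} (eta eps nm s C n m : R) :
  0 < C -> 0 < n -> 0 <= nm -> eps <= eta / 2 ->
  eta * nm <= s -> s <= C * n * m + eps * nm -> (2 * n * C)^-1 * s <= m.
Proof.
move=> C0 n0 nm0 eps_le reach_s s_le.
have pos : 0 < 2 * n * C by rewrite !mulr_gt0.
have eps_nm : eps * nm <= eta / 2 * nm by exact: ler_wpM2r.
by rewrite mulrC ler_pdivrMr //; nra.
Qed.

(* Tonelli's theorem for two measures that are merely known to be
   sigma-finite: the library states it for the sigma-finite measure
   structure, which we attach to (copies of) the given measures. *)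
Section TonelliSigmaFinite.
Local Open Scope ereal_scope.
Context {d1 d2 : measure_display} {T1 : measurableType d1}
  {T2 : measurableType d2} {R : realType}.
Variables (m1 : {measure set T1 -> \bar R}) (m2 : {measure set T2 -> \bar R}).
Hypotheses (sf1 : sigma_finite setT m1) (sf2 : sigma_finite setT m2).
Let m1' : set T1 -> \bar R := m1.
Let m2' : set T2 -> \bar R := m2.
HB.instance Definition _ := Measure.on m1'.
HB.instance Definition _ := Measure.on m2'.
HB.instance Definition _ := Measure_isSigmaFinite.Build _ _ _ m1' sf1.
HB.instance Definition _ := Measure_isSigmaFinite.Build _ _ _ m2' sf2.

Lemma tonelli_sigma_finite (f : (T1 * T2)%type -> \bar R) :
  measurable_fun [set: (T1 * T2)%type] f -> (forall z, 0 <= f z) ->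
  \int[m1]_x \int[m2]_y f (x, y) = \int[m2]_y \int[m1]_x f (x, y).
Proof. exact: (@fubini_tonelli _ _ _ _ _ m1' m2'). Qed.
End TonelliSigmaFinite.
Arguments tonelli_sigma_finite {d1 d2 T1 T2 R m1 m2}.

Definition prob_density {R : realType} {dT : measure_display}
    {T : measurableType dT} (m : {measure set T -> \bar R}) (f : T -> R) : Prop :=
  [/\ measurable_fun setT f, (forall x, 0 <= f x)
    & (\int[m]_(x in setT) (f x)%:E = 1)%E].

Definition mixed_feature {R : realType} {dT : measure_display}
    {T : measurableType dT} {A : finType} {d : nat} (M : @lrmdp R dT T A d)
    (pi : nat -> T -> A -> R) (k : nat) (m0 : {measure set T -> \bar R})
    (w : T -> R) : 'rV[R]_d :=
  \row_(i < d) Rintegral m0 setT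
    (fun x => \sum_(a : A) pi k x a * phi M k x a 0 i * w x).

Section DensityPropagation.
Context {R : realType} {dT : measure_display} {T : measurableType dT}
  {A : finType} {d : nat}.
Variables (M : @lrmdp R dT T A d) (k : nat) (pi : nat -> T -> A -> R)
  (m0 : {measure set T -> \bar R}) (w : T -> R).
Hypotheses (sf0 : sigma_finite setT m0) (sfnu : sigma_finite setT (nu M)).
Hypothesis mphi : forall a (i : 'I_d), measurable_fun setT (fun x => phi M k x a 0 i).
Hypothesis mmu : forall i : 'I_d, measurable_fun setT (fun y => mu M k.+1 y 0 i).
Hypothesis transition : forall x a,
  (forall y, 0 <= dotv (mu M k.+1 y) (phi M k x a)) /\
  (\int[nu M]_(y in setT) (dotv (mu M k.+1 y) (phi M k x a))%:E = 1)%E.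
Hypothesis phi_le1 : forall x a, enorm (phi M k x a) <= 1.
Hypothesis pi_markov : markov_policy pi.
Hypothesis w_density : prob_density m0 w.

Let feature (i : 'I_d) x := \sum_(a : A) pi k x a * phi M k x a 0 i * w x.

Let kernel y x :=
  \sum_(a : A) pi k x a * dotv (mu M k.+1 y) (phi M k x a) * w x.

Let pi_ge0 : forall h x a, 0 <= pi h x a.
Proof. by case: pi_markov. Qed.

Let pi_sum1 : forall h x, \sum_(a : A) pi h x a = 1.
Proof. by case: pi_markov => _ []. Qed.

Let pi_meas : forall h a, measurable_fun setT (fun x => pi h x a).
Proof. by case: pi_markov => _ []. Qed.

Let w_ge0 : forall x, 0 <= w x.
Proof. by case: w_density. Qed.

Let dotv_mu_meas (v : 'rV[R]_d) :
  measurable_fun setT (fun y => dotv (mu M k.+1 y) v).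
Proof. by apply: measurable_sum => i; apply: measurable_funM. Qed.

(* Features have norm at most 1, so each coordinate is dominated by w. *)
Let feature_le_w i x : `|feature i x| <= w x.
Proof.
apply: (le_trans (ler_norm_sum _ _ _)).
apply: (@le_trans _ _ (\sum_(a : A) pi k x a * w x)); last first.
  by rewrite -mulr_suml pi_sum1 mul1r.
apply: ler_sum => a _.
rewrite !normrM (ger0_norm (pi_ge0 _ _ _)) (ger0_norm (w_ge0 x)).
apply: ler_wpM2r => //; rewrite -[leRHS]mulr1; apply: ler_wpM2l => //.
exact: le_trans (coord_le_enorm _ _) (phi_le1 x a).
Qed.

Let feature_integrable i : m0.-integrable setT (EFin \o feature i).
Proof.
have [mw _ w1] := w_density.
have w_int : m0.-integrable setT (EFin \o w).
  apply/integrableP; split; first exact/measurable_EFinP.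
  under eq_integral => x _ do rewrite /= ger0_norm ?w_ge0 //.
  by rewrite w1 ltry.
apply: le_integrable w_int => //=.
- apply/measurable_EFinP; apply: measurable_sum => a.
  by apply: measurable_funM; [apply: measurable_funM|].
- by move=> x _ /=; rewrite lee_fin (ger0_norm (w_ge0 x)) feature_le_w.
Qed.

Let kernel_ge0 y x : 0 <= kernel y x.
Proof.
apply: sumr_ge0 => a _.
by rewrite mulr_ge0 // mulr_ge0 // (transition x a).1.
Qed.

(* By linearity of the integral, the candidate density at y is the
   integral of the transition mass into y. *)
Let dotv_mixed_feature y :
  (dotv (mu M k.+1 y) (mixed_feature M pi k m0 w))%:E =
  (\int[m0]_(x in setT) (kernel y x)%:E)%E.
Proof.
have kernelE x : kernel y x = \sum_(i < d) mu M k.+1 y 0 i * feature i x.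
  rewrite /kernel /feature /dotv; under [RHS]eq_bigr do rewrite mulr_sumr.
  rewrite exchange_big /=; apply: eq_bigr => a _.
  rewrite mulr_sumr mulr_suml; apply: eq_bigr => i _; ring.
under eq_integral do rewrite kernelE -sumEFin.
rewrite integral_sum //; last first.
  move=> i; under eq_fun do rewrite EFinM.
  exact: integrableZl (feature_integrable i).
rewrite /dotv -sumEFin; apply: eq_bigr => i _.
under eq_integral do rewrite EFinM.
rewrite integralZl ?feature_integrable // mxE EFinM /Rintegral fineK //.
exact: integrable_fin_num (feature_integrable i).
Qed.

Lemma mixed_feature_density :
  prob_density (nu M) (fun y => dotv (mu M k.+1 y) (mixed_feature M pi k m0 w)).
Proof.
have [mw _ w1] := w_density.
split; first exact: dotv_mu_meas.
  move=> y; rewrite -lee_fin dotv_mixed_feature.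
  by apply: integral_ge0 => x _; rewrite lee_fin kernel_ge0.
under eq_integral do rewrite dotv_mixed_feature.
have kernel_meas : measurable_fun [set: (T * T)%type] (fun z => (kernel z.1 z.2)%:E).
  apply/measurable_EFinP; apply: measurable_sum => a.
  apply: measurable_funM; [apply: measurable_funM|].
  + exact: measurableT_comp (pi_meas k a) measurable_snd.
  + apply: measurable_sum => i; apply: measurable_funM.
    * exact: measurableT_comp (mmu i) measurable_fst.
    * exact: measurableT_comp (mphi a i) measurable_snd.
  + exact: measurableT_comp mw measurable_snd.
rewrite (tonelli_sigma_finite sfnu sf0 _ kernel_meas); last first.
  by move=> z; rewrite lee_fin kernel_ge0.
rewrite -w1; apply: eq_integral => x _ /=.
(* Each action contributes pi(a|x) w(x) times a total transition mass 1. *)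
transitivity (\sum_(a : A) (pi k x a * w x)%:E)%E; last first.
  by rewrite sumEFin -mulr_suml pi_sum1 mul1r.
under eq_integral do rewrite -sumEFin.
rewrite ge0_integral_sum //; last first.
- by move=> a y _; rewrite lee_fin !mulr_ge0 // (transition x a).1.
- move=> a; apply/measurable_EFinP.
  by apply: measurable_funM => //; apply: measurable_funM => //; exact: dotv_mu_meas.
apply: eq_bigr => a _.
under eq_integral do rewrite mulrAC EFinM.
rewrite ge0_integralZl_EFin ?(transition x a).2 ?mule1 ?mulr_ge0 //.
- by move=> y _; rewrite lee_fin (transition x a).1.
- exact/measurable_EFinP/dotv_mu_meas.
Qed.
End DensityPropagation.

Section StateOccupancy.
Context {R : realType} {dT : measure_display} {T : measurableType dT}
  {A : finType} {d : nat} {H : nat} {M : @lrmdp R dT T A d}.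
Hypothesis M_lowrank : is_lowrank_mdp H M.

Lemma featocc_first (pi : nat -> T -> A -> R) :
  featocc M pi 1 = mixed_feature M pi 1 (rho M) (fun _ => 1).
Proof.
apply/rowP => i; rewrite !mxE; apply: eq_Rintegral => x _.
by apply: eq_bigr => a _; rewrite mulr1.
Qed.

Lemma featocc_next (pi : nat -> T -> A -> R) (j : nat) :
  featocc M pi j.+2 = mixed_feature M pi j.+2 (nu M) (occ_dens M pi j.+2).
Proof. by []. Qed.

Let nu_sigma_finite : sigma_finite setT (nu M).
Proof. by case: M_lowrank. Qed.

Lemma rho_sigma_finite : sigma_finite setT (rho M).
Proof.
apply: fin_num_fun_sigma_finite; first by rewrite measure0 ltry.
exact: fin_num_measure.
Qed.

Lemma rho_density : prob_density (rho M) (fun _ => 1).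
Proof.
split => [|//|]; first exact: measurable_cst.
by rewrite (integral_cst _ _ 1%E) //= probability_setT mul1e.
Qed.

Lemma density_step (pi : nat -> T -> A -> R) (j : nat)
    (m0 : {measure set T -> \bar R}) (w : T -> R) :
  (1 <= j <= H.-1)%N -> sigma_finite setT m0 -> markov_policy pi ->
  prob_density m0 w ->
  prob_density (nu M) (fun y => dotv (mu M j.+1 y) (mixed_feature M pi j m0 w)).
Proof.
case: M_lowrank => [sfnu [mphi [mmu [transition [phi_le1 _]]]]] hj sf0.
have hj1 : (2 <= j.+1 <= H)%N by move: hj; lia.
apply: mixed_feature_density => //.
- exact: mphi.
- exact: mmu.
- exact: transition.
- exact: phi_le1.
Qed.

Lemma occ_dens_density (pi : nat -> T -> A -> R) (k : nat) :
  (1 <= k <= H.-1)%N -> markov_policy pi -> prob_density (nu M) (occ_dens M pi k.+1).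
Proof.
move=> + pi_markov; elim: k => [//|[|j] IH] hk.
- change (prob_density (nu M) (fun y => dotv (mu M 2 y) (featocc M pi 1))).
  rewrite featocc_first.
  exact: density_step rho_sigma_finite pi_markov rho_density.
- change (prob_density (nu M) (fun y => dotv (mu M j.+3 y) (featocc M pi j.+2))).
  have hj : (1 <= j.+1 <= H.-1)%N by move: hk; lia.
  rewrite featocc_next.
  exact: density_step nu_sigma_finite pi_markov (IH hj).
Qed.

(* A policy witnesses a nonempty action set; the transition densities
   then cannot integrate to 1 in dimension 0. *)
Lemma lowrank_dim_gt0 (pi : nat -> T -> A -> R) (h : nat) (x : T) :
  (1 <= h <= H.-1)%N -> markov_policy pi -> (0 < d)%N.
Proof.
case: M_lowrank => [_ [_ [_ [transition _]]]] hh [_ [pi_sum1 _]].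
case: (pickP A) => [a _ | noA]; last first.
  by move: (pi_sum1 h x); rewrite big_pred0 // => /eqP; rewrite eq_sym oner_eq0.
rewrite lt0n; apply/negP => /eqP d0.
have dot0 (u v : 'rV[R]_d) : dotv u v = 0.
  by rewrite /dotv big1 // => i _; move: (ltn_ord i); rewrite {2}d0.
have := (transition h hh x a).2.
under eq_integral do rewrite dot0.
by rewrite integral0 => /(congr1 fine) /eqP; rewrite eq_sym oner_eq0.
Qed.
End StateOccupancy.

Lemma ereal_sup_image_nonempty {R : realType} {U : Type} {P : set U}
    {f : U -> \bar R} {r : R} :
  (r%:E <= ereal_sup (f @` P))%E -> exists u, P u.
Proof.
have [[u Pu]|noP] := pselect (exists u, P u); first by exists u.
rewrite (_ : f @` P = set0) ?ereal_sup0 ?leeNy_eq //.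
by apply/seteqP; split => // y [u Pu _]; apply: noP; exists u.
Qed.

Theorem mainTheorem3 (R : realType) (dT : measure_display) (T : measurableType dT)
  (A : finType) (d H : nat) (M : @lrmdp R dT T A d) (eta : R)
  (h : nat) (C eps : R) (Psi : 'I_d -> (nat -> T -> A -> R)) :
  is_lowrank_mdp H M ->
  0 < eta -> eta_reachable H M eta ->
  (1 <= h <= H.-1)%N -> 1 <= C -> eps <= eta / 2 ->
  (forall i, markov_policy (Psi i)) ->
  approx_bspanner (feat_set M h) (fun i => featocc M (Psi i) h) C eps ->
  forall x : T,
    (\big[Order.max/-oo]_(i < d) (occ_dens M (Psi i) h.+1 x)%:E
      >= ((2 * d%:R * C)^-1)%:E *
         ereal_sup [set (occ_dens M pi h.+1 x)%:E | pi in markov_policy])%E.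
Proof.
move=> M_lowrank _ reach hh C1 eps_le Psi_markov [_ [_ spanner]] x.
set S := ereal_sup _.
have reach_x : ((eta * enorm (mu M h.+1 x))%:E <= S)%E.
  by apply: reach; move: hh; lia.
have [pi0 pi0_markov] := ereal_sup_image_nonempty reach_x.
have d_gt0 := lowrank_dim_gt0 M_lowrank _ _ x hh pi0_markov.
pose F i := occ_dens M (Psi i) h.+1 x.
have [ibest _ F_max] := @arg_maxP _ _ _ (Ordinal d_gt0) predT F isT.
set m := F ibest.
(* Every d^pi(x) is controlled through the spanner decomposition of phi^pi_h. *)
have S_le : (S <= (C * d%:R * m + eps * enorm (mu M h.+1 x))%:E)%E.
  apply: ge_ereal_sup => y [pi pi_markov <-]; rewrite lee_fin.
  have [beta [beta_C err]] := spanner _ (ex_intro2 _ _ pi pi_markov erefl).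
  apply: dotv_approx_combination err; first by lra.
    by move=> j; have /andP[] := beta_C j.
  move=> j; have [_ F_ge0 _] := occ_dens_density M_lowrank _ _ hh (Psi_markov j).
  by apply/andP; split; [exact: F_ge0 | exact: F_max].
(* S is finite, and reachability absorbs the error term. *)
apply: le_trans (le_bigmax _ (fun i => (F i)%:E) ibest).
move: reach_x S_le; clearbody S; case: S => [s| |] //= reach_s s_le.
rewrite -EFinM lee_fin.
apply: half_reach_absorb reach_s s_le => //; first by lra.
- by rewrite ltr0n.
- exact: enorm_ge0.
Qed.
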